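(* Let $q\ge 2$ be an integer, and let $\Gamma=(V,E)$ be a complete digraph on $\lceil 2q\ln q\rceil$ vertices with weights $w(e)\in\mathbb{Z}_q$ on its edges. Then $\Gamma$ contains a directed cycle $C$ whose total weight $\sum_{e\in C} w(e)$ is $0$ in $\mathbb{Z}_q$.
   Context: A complete digraph is a digraph in which every ordered pair $(u,v)$ of distinct vertices is joined by exactly one directed edge from $u$ to $v$ (so each pair of vertices is connected by one edge in each direction). Directed cycles may have length $2$. *)

From mathcomp Require Import all_boot all_order all_algebra.
From mathcomp Require Import all_classical all_reals exp.
Set Implicit Arguments. Unset Strict Implicit. Unset Printing Implicit Defensive.
Import Order.TTheory GRing.Theory Num.Theory.
Local Open Scope ring_scope.

(* Number of vertices: ceil(2 q ln q), computed in an arbitrary realType R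
   (the value does not depend on R). *)
Definition nverts (R : realType) (q : nat) : nat :=
  `| Num.ceil (2 * q%:R * ln (q%:R : R)) |%N.

(* A complete digraph on vertex set 'I_n with Z_q weights is a function
   w : 'I_n -> 'I_n -> 'Z_q; w u v is the weight of the edge u -> v (u != v).
   Values on the diagonal are never used. *)

(* A directed cycle: a sequence of >= 2 pairwise distinct vertices
   v_0, ..., v_{k-1}, with edges v_i -> v_{i+1} and v_{k-1} -> v_0. *)
Definition is_dcycle (n : nat) (s : seq 'I_n) : bool := (1 < size s)%N && uniq s.

Definition dcycle_edges (n : nat) (s : seq 'I_n) : seq ('I_n * 'I_n) :=
  zip s (rot 1 s).

Definition dcycle_weight (n q : nat) (w : 'I_n -> 'I_n -> 'Z_q) (s : seq 'I_n) : 'Z_q :=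
  \sum_(e <- dcycle_edges s) w e.1 e.2.

(* Induction on a subgroup H containing all edge weights (at first all of Z_q) shows that
   max(2, 4|H| - 5) vertices force a zero cycle; and 4q - 5 <= ceil(2 q ln q) because
   ln x >= ln 3 + 1 - 3/x and e < 3.
   Fix a start vertex v0 and grow a set T of weights of simple paths from v0 to an end
   vertex c avoiding a set W of unused vertices, keeping 4|H| <= |W| + 2|T| + 4.  Let K be
   the stabilizer of T under translation.  If some u != v in W have
   w(c,u) + w(u,v) - w(c,v) outside K, extending the paths by c -> v or by c -> u -> v gives
   the strictly larger set (T + w(c,v)) \cup (T + w(c,u) + w(u,v)) of path weights ending
   at v, at the price of two vertices; once it is all of H it contains -w(v,v0), and the
   edge back to v0 closes a zero cycle.  Otherwise the weights on W shifted by the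
   potential w(c,_), which leaves cycle weights unchanged, all lie in K, a proper subgroup
   of H hence of order at most |H|/2, and the invariant makes W large enough for the
   induction hypothesis. *)

From mathcomp Require Import all_boot all_order all_algebra all_fingroup.
From mathcomp Require Import all_classical all_reals exp.
From mathcomp Require Import sequences ring lra zify.
(* Give the finite-set notations and lemmas back precedence over classical_sets. *)
From mathcomp Require Import fintype finset fingroup.
Set Implicit Arguments. Unset Strict Implicit. Unset Printing Implicit Defensive.
Import Order.TTheory GRing.Theory Num.Theory.
Local Open Scope ring_scope.

Section CycleWeight.
Variables (n : nat) (G : zmodType).
Implicit Types (w : 'I_n -> 'I_n -> G) (x : 'I_n) (r s : seq 'I_n).

Definition path_weight w x r : G := \sum_(e <- zip (belast x r) r) w e.1 e.2.

Definition cycle_weight w s : G := \sum_(e <- dcycle_edges s) w e.1 e.2.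

Definition zero_cycle w : Prop := exists s, is_dcycle s /\ cycle_weight w s = 0.

Lemma path_weight_rcons w x r y :
  path_weight w x (rcons r y) = path_weight w x r + w (last x r) y.
Proof.
rewrite /path_weight belast_rcons lastI zip_rcons ?size_belast //.
by rewrite -cats1 big_cat big_seq1.
Qed.

Lemma cycle_weight_cons w x r :
  cycle_weight w (x :: r) = path_weight w x r + w (last x r) x.
Proof.
rewrite -path_weight_rcons /path_weight belast_rcons.
by rewrite /cycle_weight /dcycle_edges rot1_cons.
Qed.

Lemma cycle_weight_shift w (p : 'I_n -> G) s :
  cycle_weight (fun u v => p u + w u v - p v) s = cycle_weight w s.
Proof.
rewrite /cycle_weight /dcycle_edges !big_split /= sumrN.
have -> : \sum_(e <- zip s (rot 1 s)) p e.2 = \sum_(e <- zip s (rot 1 s)) p e.1.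
  rewrite -(big_map snd xpredT p) -(big_map fst xpredT p).
  rewrite [map snd _]unzip2_zip ?[map fst _]unzip1_zip ?size_rot //.
  by apply: perm_big; rewrite perm_rot.
by rewrite addrC addKr.
Qed.

Lemma zero_cycle_shift w (p : 'I_n -> G) :
  zero_cycle (fun u v => p u + w u v - p v) -> zero_cycle w.
Proof. by case=> s [s_cycle s_weight]; exists s; rewrite -(cycle_weight_shift w p). Qed.

End CycleWeight.

Section TranslationStabilizer.
Variable gT : finGroupType.
Implicit Types (T : {set gT}) (a d : gT).

Lemma proper_subgroup_card (K H : {group gT}) : K \proper H -> (2 * #|K| <= #|H|)%N.
Proof.
case/andP=> sKH nsHK; rewrite -(Lagrange sKH) mulnC leq_mul2l.
by rewrite indexg_gt1 nsHK orbT.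
Qed.

Lemma astab1Rs_proper T (H : {group gT}) :
  T != set0 -> T \proper H -> ('C[T | 'Rs] \proper H)%g.
Proof.
case/set0Pn=> t tT /andP[sTH nsHT]; have tH := subsetP sTH t tT.
have TdT d : d \in ('C[T | 'Rs])%g -> (T :* d)%g = T.
  by move/astab1P; rewrite /= rcosetE.
apply/andP; split.
  apply/subsetP=> d /TdT TdE; rewrite -(groupMl d tH); apply: (subsetP sTH).
  by rewrite -TdE mem_rcoset mulgK.
apply: contra nsHT => sHK; apply/subsetP=> h hH.
have /TdT <- : (t^-1 * h \in 'C[T | 'Rs])%g by rewrite (subsetP sHK) // groupM ?groupV.
by rewrite mem_rcoset invMg invgK mulKVg.
Qed.

Lemma rcoset_properUl T d a :
  d \notin ('C[T | 'Rs])%g -> (T :* a \proper T :* a :|: T :* (d * a))%g.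
Proof.
move=> dNstab; rewrite rcosetM; apply: properUl; rewrite rcosetS.
apply: contra dNstab => sTdT; apply/astab1P; rewrite /= rcosetE.
by apply/eqP; rewrite eqEcard sTdT card_rcoset leqnn.
Qed.

End TranslationStabilizer.

Section PathSums.
Variables (n : nat) (G : zmodType) (w : 'I_n -> 'I_n -> G) (v0 : 'I_n).
Implicit Types (W : {set 'I_n}) (c : 'I_n) (t : G).

Definition path_sum W c t : Prop := exists r, [/\ uniq (v0 :: r),
  {subset v0 :: r <= ~: W}, last v0 r = c & path_weight w v0 r = t].

Lemma path_sum_nil W : v0 \notin W -> path_sum W v0 0.
Proof.
move=> v0W; exists [::]; split=> //; last by rewrite /path_weight big_nil.
by move=> x; rewrite mem_seq1 inE => /eqP->.
Qed.

Lemma path_sum_ends W c t : path_sum W c t -> v0 \notin W /\ c \notin W.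
Proof.
case=> r [_ sub_rW <- _]; have rNW x : x \in v0 :: r -> x \notin W.
  by move/sub_rW; rewrite inE.
by split; apply: rNW; rewrite ?mem_head ?mem_last.
Qed.

Lemma path_sum_subset W W' c t : W' \subset W -> path_sum W c t -> path_sum W' c t.
Proof.
move=> sW'W [r [r_uniq sub_rW r_last r_weight]]; exists r; split=> // x /sub_rW.
by rewrite !inE; apply: contra => /(subsetP sW'W).
Qed.

Lemma path_sum_rcons W c t v :
  path_sum W c t -> v \in W -> path_sum (W :\ v) v (t + w c v).
Proof.
case=> r [r_uniq sub_rW r_last r_weight] vW.
have vNr : v \notin v0 :: r by apply: contraL vW => /sub_rW; rewrite inE.
exists (rcons r v); split.
- by rewrite -rcons_cons rcons_uniq vNr.
- move=> x; rewrite -rcons_cons mem_rcons inE => /predU1P[-> | /sub_rW].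
    by rewrite !inE eqxx.
  by rewrite !inE negb_and => ->; rewrite orbT.
- by rewrite last_rcons.
- by rewrite path_weight_rcons r_last r_weight.
Qed.

Lemma path_sum_cycle W c t : path_sum W c t -> c != v0 -> t + w c v0 = 0 -> zero_cycle w.
Proof.
case=> r [r_uniq _ r_last r_weight] cNv0 closed; exists (v0 :: r); split.
  have r_nil : r != [::] by apply: contraNneq cNv0 => r_nil; rewrite -r_last r_nil.
  by rewrite /is_dcycle r_uniq andbT /= ltnS lt0n size_eq0.
by rewrite cycle_weight_cons r_last r_weight.
Qed.

End PathSums.

Section ZeroCycle.
Variables (n : nat) (G : finZmodType).
Implicit Types (H T : {set G}) (X W : {set 'I_n}) (w : 'I_n -> 'I_n -> G).

Definition weights_in H X w : bool :=
  [forall u in X, forall v in X, (u != v) ==> (w u v \in H)].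

Lemma weights_inP H X w :
  reflect {in X &, forall u v, u != v -> w u v \in H} (weights_in H X w).
Proof.
apply: (iffP forall_inP) => [wH u v uX vX | wH u uX].
  by move/forall_inP/(_ v vX)/implyP: (wH u uX).
by apply/forall_inP => v vX; apply/implyP; apply: wH.
Qed.

Definition forces_zero_cycle H : Prop := forall X w,
  weights_in H X w -> (2 <= #|X|)%N -> (4 * #|H| <= #|X| + 5)%N -> zero_cycle w.

Section Growth.
Variables (H : {group G}) (X : {set 'I_n}) (w : 'I_n -> 'I_n -> G) (v0 : 'I_n).
Hypotheses (wH : weights_in H X w) (v0X : v0 \in X).
Hypothesis IH : forall K : {group G}, K \proper H -> forces_zero_cycle K.

Lemma zero_cycle_of_stabilized_weights W c T :
  T != set0 -> T \proper H -> (4 * #|H| <= #|W| + 2 * #|T| + 4)%N ->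
  weights_in ('C[T | 'Rs])%g W (fun u v => w c u + w u v - w c v) -> zero_cycle w.
Proof.
move=> T0 TH inv wK; apply: (zero_cycle_shift (p := w c)).
have KH := astab1Rs_proper T0 TH.
pose k := #|('C[T | 'Rs])%g|.
have K_half : (2 * k <= #|H|)%N := proper_subgroup_card KH.
have K_gt0 : (0 < k)%N := cardG_gt0 _.
have T_lt : (#|T| < #|H|)%N := proper_card TH.
have [W_ge2 K_le] : (2 <= #|W|)%N /\ (4 * k <= #|W| + 5)%N by lia.
exact: (IH KH wK).
Qed.

Lemma zero_cycle_of_path_sums W c T :
  W \subset X -> c \in X -> T != set0 -> T \proper H ->
  {in T, forall t, path_sum w v0 W c t} ->
  (4 * #|H| <= #|W| + 2 * #|T| + 4)%N -> zero_cycle w.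
Proof.
have [m] := ubnP #|W|; elim: m => // m IHm in W c T *; rewrite ltnS => leWm.
move=> sWX cX T0 TH pT inv.
have [v0W cW] : v0 \notin W /\ c \notin W by case/set0Pn: T0 => t /pT/path_sum_ends.
have [|/forall_inPn[u uW /forall_inPn[v vW]]] :=
  boolP (weights_in ('C[T | 'Rs])%g W (fun u v => w c u + w u v - w c v)).
  exact: zero_cycle_of_stabilized_weights.
rewrite negb_imply => /andP[uv dNK].
have /weights_inP wXH := wH.
have [uX vX] := (subsetP sWX u uW, subsetP sWX v vW).
have [cu cv] : c != u /\ c != v by split; apply: contraNneq cW => ->.
have vWu : v \in W :\ u by rewrite !inE eq_sym uv.
pose T' : {set G} := (T :* w c v :|: T :* (w c u + w u v))%g.
have pT' : {in T', forall t, path_sum w v0 (W :\ u :\ v) v t}.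
  move=> t; rewrite inE !mem_rcoset => /orP[/pT | /pT] p.
    have := path_sum_subset (setSD _ (subD1set W u)) (path_sum_rcons p vW).
    by rewrite subrK.
  have := path_sum_rcons (path_sum_rcons p uW) vWu.
  by rewrite -addrA subrK.
have TT' : (#|T| < #|T'|)%N.
  rewrite -(card_rcoset T (w c v)); apply: proper_card.
  by rewrite /T' -[w c u + w u v](subrK (w c v)); exact: (rcoset_properUl (w c v) dNK).
have T'H : T' \subset H.
  have sub_rcoset a : a \in H -> (T :* a \subset H)%g.
    by move=> aH; rewrite -(rcoset_id aH) rcosetS (proper_sub TH).
  by rewrite subUset !sub_rcoset ?groupM ?wXH.
have cardW : #|W| = (#|W :\ u :\ v|).+2.
  by rewrite (cardsD1 u W) uW (cardsD1 v (W :\ u)) vWu.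
have [T'H_proper | T'_full] := boolP (T' \proper H).
  apply: (IHm (W :\ u :\ v) v T') => //.
  - by rewrite (leq_trans _ leWm) // cardW.
  - exact: subset_trans (subD1set _ v) (subset_trans (subD1set W u) sWX).
  - by rewrite -card_gt0 (leq_ltn_trans _ TT').
  - by move: inv TT'; rewrite cardW; clear; lia.
have T'E : T' = H by apply/eqP; rewrite eqEproper T'H.
have vv0 : v != v0 by apply: contraNneq v0W => <-.
have wvv0 : - w v v0 \in T' by rewrite T'E groupV wXH.
exact: path_sum_cycle (pT' _ wvv0) vv0 (addNr _).
Qed.

End Growth.

Theorem group_forces_zero_cycle (H : {group G}) : forces_zero_cycle H.
Proof.
have [m] := ubnP #|H|; elim: m => // m IHm in H *; rewrite ltnS => leHm.
move=> X w wH X_ge2 X_le; have /weights_inP wXH := wH.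
have [v0 v0X] : exists v0, v0 \in X by apply/card_gt0P; lia.
have cardX : #|X| = #|X :\ v0|.+1 by rewrite (cardsD1 v0 X) v0X.
have [ntH | ] := boolP ([1 G] \proper H)%g.
  apply: (zero_cycle_of_path_sums wH v0X _ (subD1set X v0) v0X _ ntH) => //.
  - by move=> K KH; apply: IHm; apply: leq_trans (proper_card KH) leHm.
  - by apply/set0Pn; exists 1%g; rewrite inE.
  - by move=> t; rewrite inE => /eqP ->; apply: path_sum_nil; rewrite !inE eqxx.
  - by apply: leq_trans X_le _; rewrite cardX cards1; lia.
rewrite proper1G negbK => /eqP H1.
have w0 x y : x \in X -> y \in X -> x != y -> w x y = 0.
  by move=> xX yX xy; have := wXH x y xX yX xy; rewrite H1 => /set1P.
have [v] : exists v, v \in X :\ v0 by apply/card_gt0P; lia.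
rewrite !inE => /andP[vv0 vX]; exists [:: v0; v]; split.
  by rewrite /is_dcycle /= inE eq_sym vv0.
rewrite cycle_weight_cons /path_weight /= big_seq1 /=.
by rewrite !w0 ?addr0 // eq_sym.
Qed.

End ZeroCycle.

Section LnBound.
Variable R : realType.
Implicit Type x : R.

Lemma expR1_lt3 : expR 1 < 3 :> R.
Proof.
(* expR (- 1/6) > 5/6, hence expR 1 < (6/5)^6 < 3. *)
set y := expR (6^-1 : R).
have y_gt0 : 0 < y by exact: expR_gt0.
have y_lt : y < 6 / 5.
  have := @expR_gt1Dx R (- 6^-1); rewrite oppr_eq0 invr_eq0 pnatr_eq0 expRN -/y.
  move=> /(_ isT); rewrite -[X in _ < X -> _]mul1r ltr_pdivlMr // => h.
  lra.
have -> : expR 1 = y ^+ 6 by rewrite -expRM_natl mulfV ?pnatr_eq0.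
apply: le_lt_trans (_ : (6 / 5) ^+ 6 < 3); last by lra.
by rewrite ltW // ltrXn2r // ltW.
Qed.

Lemma ln3_gt1 : 1 < ln 3 :> R.
Proof. by rewrite -[X in X < _](expRK 1) ltr_ln ?posrE ?expR_gt0 ?expR1_lt3. Qed.

Lemma ln_ge1_subV x : 0 < x -> 1 - x^-1 <= ln x.
Proof.
move=> x_gt0; have := @le_ln1Dx R (x^-1 - 1).
rewrite [1 + _]addrC subrK lnV ?posrE // ltrBrDl subrr invr_gt0 => /(_ x_gt0).
lra.
Qed.

Lemma ln_gt_two_sub x : 0 < x -> 2 - 3 / x < ln x.
Proof.
move=> x_gt0; have := ln_ge1_subV (_ : 0 < x / 3); rewrite divr_gt0 // invf_div.
rewrite ln_div ?posrE // => /(_ isT); have := ln3_gt1; lra.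
Qed.

Lemma nverts_ge (q : nat) : (0 < q)%N -> (4 * q <= nverts R q + 5)%N.
Proof.
move=> q_gt0; have q_pos : 0 < q%:R :> R by rewrite ltr0n.
have lnq : (4 * q)%:R - 6 < 2 * q%:R * ln (q%:R : R).
  have -> : (4 * q)%:R - 6 = 2 * q%:R * (2 - 3 / q%:R) :> R.
    by rewrite natrM; field; rewrite gt_eqF.
  by rewrite ltr_pM2l ?mulr_gt0 // ln_gt_two_sub.
have : (4 * q)%:Z - 6 < Num.ceil (2 * q%:R * ln (q%:R : R)).
  by rewrite ceil_gt_int rmorphB.
rewrite /nverts; lia.
Qed.
End LnBound.

Theorem lemma4 (R : realType) (q : nat) (hq : (2 <= q)%N)
  (w : 'I_(nverts R q) -> 'I_(nverts R q) -> 'Z_q) :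
  exists s : seq 'I_(nverts R q), is_dcycle s /\ dcycle_weight w s = 0.
Proof.
have card_Zq : #|[set: 'Z_q]| = q by rewrite cardsT card_ord Zp_cast.
have nverts_q := nverts_ge R (ltnW hq).
apply: (@group_forces_zero_cycle _ _ [set: _]%G [set: 'I_(nverts R q)] w).
- by apply/weights_inP => u v *; rewrite inE.
- by rewrite cardsT card_ord; lia.
- by rewrite cardsT card_ord card_Zq.
Qed.
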